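(* Let $\omega$ be a primitive third root of unity, $S=\mathbb{C}\langle x,y,z\rangle/(x^2,y^2,z^2)$, and for $t\in\mathbb{C}^*$ let $T_t$ be the quotient of $S$ by the two-sided ideal generated by $(zxy+\omega xyz+\omega^2 yzx)+t(yxz+\omega zyx+\omega^2 xzy)$ and $(zxy+\omega^2 xyz+\omega yzx)+t(yxz+\omega^2 zyx+\omega xzy)$; let $M_t=T_t/(g_t)$ with $g_t=(zxy+xyz+yzx)+t(yxz+zyx+xzy)$. If $-t$ is a primitive $n$th root of unity, then the PI-degree of $M_t$ is $2n$.
   Context: For an algebra finite over its center, the PI-degree is the maximal dimension of its simple (finite-dimensional) representations. *)

From HB Require Import structures.
From mathcomp Require Import all_boot all_order all_algebra all_field.
From mathcomp Require Import reals.
From mathcomp Require Import complex.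
Set Implicit Arguments. Unset Strict Implicit. Unset Printing Implicit Defensive.
Import GRing.Theory Num.Theory.
Local Open Scope ring_scope.
Local Open Scope complex_scope.

(* A d-dimensional representation of
   M_t = C<x,y,z>/(x^2,y^2,z^2, r1_t, r2_t, g_t)
   is an algebra morphism M_t -> 'M_d, i.e. a triple of d x d matrices
   (images of x, y, z, acting on column vectors) satisfying the defining
   relations. *)
Section Rep.
Variables (R : realType) (d : nat) (w t : R[i]) (X Y Z : 'M[R[i]]_d).

Let m3 (A B C : 'M[R[i]]_d) := A *m B *m C.

Definition rel1 : 'M[R[i]]_d :=
  (m3 Z X Y + w *: m3 X Y Z + (w ^+ 2) *: m3 Y Z X)
  + t *: (m3 Y X Z + w *: m3 Z Y X + (w ^+ 2) *: m3 X Z Y).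

Definition rel2 : 'M[R[i]]_d :=
  (m3 Z X Y + (w ^+ 2) *: m3 X Y Z + w *: m3 Y Z X)
  + t *: (m3 Y X Z + (w ^+ 2) *: m3 Z Y X + w *: m3 X Z Y).

Definition relg : 'M[R[i]]_d :=
  (m3 Z X Y + m3 X Y Z + m3 Y Z X) + t *: (m3 Y X Z + m3 Z Y X + m3 X Z Y).

Definition is_rep_Mt : Prop :=
  [/\ X *m X = 0, Y *m Y = 0, Z *m Z = 0 & [/\ rel1 = 0, rel2 = 0 & relg = 0]].

Definition col_invariant (A U : 'M[R[i]]_d) : Prop :=
  exists B : 'M[R[i]]_d, A *m U = U *m B.

Definition simple_rep : Prop :=
  (0 < d)%N /\
  forall U : 'M[R[i]]_d,
    col_invariant X U -> col_invariant Y U -> col_invariant Z U ->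
    \rank U = 0%N \/ \rank U = d.
End Rep.

(* m is the PI-degree of M_t: the maximal dimension of a simple
   finite-dimensional representation of M_t is m. *)
Definition PI_degree_Mt (R : realType) (w t : R[i]) (m : nat) : Prop :=
  (exists X Y Z : 'M[R[i]]_m, is_rep_Mt w t X Y Z /\ simple_rep X Y Z) /\
  (forall (d : nat) (X Y Z : 'M[R[i]]_d),
      is_rep_Mt w t X Y Z -> simple_rep X Y Z -> (d <= m)%N).

From mathcomp Require Import all_boot all_algebra.
From mathcomp Require Import reals complex spectral ring.

(* Since 1 + w + w^2 = 0, the three cubic relations defining M_t amount, by
   inverting a discrete Fourier transform of order 3, to the q-commutation
   relations zxy = q yxz, xyz = q zyx, yzx = q xzy with q = -t.
   Upper bound: in a simple representation some pair of generators, say x and z,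
   has a nonzero common kernel, since otherwise every vector would be killed by y
   and then by x.  On that kernel yx and (yz)^n commute because q^n = 1; a common
   eigenvector v spans, together with the v (yz)^k and v (yz)^k y for k < n, a
   nonzero invariant subspace of dimension at most 2n.
   Lower bound: the clock Q = diag(q^i) and the cyclic shift S satisfy
   S Q = q Q S, and the block matrices x = [0 0; Q 0], y = [0 1; 0 0],
   z = [0 0; S 0] (acting on row vectors) give a simple representation of
   dimension 2n: an invariant subspace contains an eigenvector of
   yx + xy = diag(Q, Q), hence a basis vector, and then the whole yz-orbit. *)

Set Implicit Arguments. Unset Strict Implicit. Unset Printing Implicit Defensive.
Import GRing.Theory.
Local Open Scope ring_scope.

Section CubeRootsOfUnity.
Variables (F : fieldType) (w : F).
Hypothesis prim_w : 3.-primitive_root w.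

Lemma prim_root3_sum : 1 + w + w ^+ 2 = 0.
Proof.
have w_neq1 : w - 1 != 0.
  by rewrite subr_eq0 -[w]expr1 -(prim_order_dvd prim_w).
have : (w - 1) * (1 + w + w ^+ 2) == 0.
  have -> : (w - 1) * (1 + w + w ^+ 2) = w ^+ 3 - 1 by ring.
  by rewrite (prim_expr_order prim_w) subrr.
by rewrite mulf_eq0 (negbTE w_neq1) => /eqP.
Qed.

Lemma dft3_eq0 (a b c : F) :
  a + w * b + w ^+ 2 * c = 0 -> a + w ^+ 2 * b + w * c = 0 -> a + b + c = 0 ->
  [/\ a = 0, b = 0 & c = 0].
Proof.
have w3 := prim_expr_order prim_w; have w_sum := prim_root3_sum.
move=> e1 e2 e3; have three_mul0 (u : F) : 3%:R * u = 0 -> u = 0.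
  by move/eqP; rewrite mulf_eq0 (negbTE (prim_root_natf_neq0 prim_w)) => /eqP.
(* The three combinations invert the discrete Fourier transform of order 3. *)
split; apply: three_mul0.
- have -> : 3%:R * a = (a + w * b + w ^+ 2 * c) + (a + w ^+ 2 * b + w * c)
      + (a + b + c) - (1 + w + w ^+ 2) * (b + c) by ring.
  by rewrite e1 e2 e3 w_sum; ring.
- have -> : 3%:R * b = w ^+ 2 * (a + w * b + w ^+ 2 * c)
      + w * (a + w ^+ 2 * b + w * c) + (a + b + c)
      - (1 + w + w ^+ 2) * (a + c) - (w ^+ 3 - 1) * (2%:R * b + w * c) by ring.
  by rewrite e1 e2 e3 w_sum w3; ring.
- have -> : 3%:R * c = w * (a + w * b + w ^+ 2 * c)
      + w ^+ 2 * (a + w ^+ 2 * b + w * c) + (a + b + c)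
      - (1 + w + w ^+ 2) * (a + b) - (w ^+ 3 - 1) * (w * b + 2%:R * c) by ring.
  by rewrite e1 e2 e3 w_sum w3; ring.
Qed.

Lemma dft3_mx_eq0 m n (a b c : 'M[F]_(m, n)) :
  a + w *: b + w ^+ 2 *: c = 0 -> a + w ^+ 2 *: b + w *: c = 0 -> a + b + c = 0 ->
  [/\ a = 0, b = 0 & c = 0].
Proof.
move=> /matrixP e1 /matrixP e2 /matrixP e3.
have e i j : [/\ a i j = 0, b i j = 0 & c i j = 0].
  by apply: dft3_eq0; [move: (e1 i j) | move: (e2 i j) | move: (e3 i j)];
    rewrite !mxE.
by split; apply/matrixP => i j; have [] := e i j; rewrite mxE.
Qed.
End CubeRootsOfUnity.

Lemma expr_eq1_neq0 (R : nzRingType) (x : R) n : (0 < n)%N -> x ^+ n = 1 -> x != 0.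
Proof.
by move=> n_gt0; apply: contra_eq_neq => ->; rewrite expr0n gtn_eqF // eq_sym oner_eq0.
Qed.

Lemma ordS_ind n (P : pred 'I_n) k :
  P k -> (forall i, P i -> P (ordS i)) -> forall j, P j.
Proof.
move=> Pk PS j.
have iter_ordS m : val (iter m (@ordS n) k) = ((k + m) %% n)%N.
  elim: m => [|m IHm] /=; first by rewrite addn0 modn_small.
  by rewrite IHm -addn1 modnDml addn1 addnS.
have -> : j = iter (j + n - k) (@ordS n) k.
  apply: val_inj; rewrite iter_ordS addnBA;
    last exact: leq_trans (ltnW (ltn_ord k)) (leq_addl _ _).
  by rewrite addnC addnK modnDr modn_small.
by elim: (j + n - k)%N => //= m; apply: PS.
Qed.

Lemma stablemx_common_eigenvector (C : numClosedFieldType) d (K A B : 'M[C]_d) :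
  K != 0 -> stablemx K A -> stablemx K B -> A *m B = B *m A ->
  exists2 v : 'rV_d, v != 0 & [&& (v <= K)%MS, stablemx v A & stablemx v B].
Proof.
move=> K_neq0 KA KB AB.
have rK_gt0 : (0 < \rank K)%N by rewrite lt0n mxrank_eq0.
have [|u u_neq0 /andP[uA uB]] :=
  @common_eigenvector2 C _ (restrictmx K A) (restrictmx K B) rK_gt0.
  by rewrite -!conjmxM ?inE ?stablemx_row_base // AB.
exists (u *m row_base K); first by rewrite mulmx_free_eq0 ?row_base_free.
rewrite -!stablemx_restrict // uA uB andbT.
by rewrite (submx_trans (submxMl _ _)) // eq_row_base.
Qed.

Lemma stablemx_submx_mul (F : fieldType) m d (W : 'M[F]_d) (v : 'M[F]_(m, d)) M :
  (v <= W)%MS -> stablemx W M -> (v *m M <= W)%MS.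
Proof. by move=> vW WM; exact: submx_trans (submxMr M vW) WM. Qed.

Lemma row_mx_neq0_coord (F : fieldType) n (a b : 'rV[F]_n) :
  row_mx a b != 0 -> exists k, (a 0 k != 0) || (b 0 k != 0).
Proof.
move=> ab_neq0; apply/existsP; apply: contraNT ab_neq0 => /existsPn ab0.
rewrite row_mx_eq0; apply/andP; split; apply/eqP/rowP => j;
  by move: (ab0 j); rewrite negb_or !negbK !mxE => /andP[/eqP ? /eqP ?].
Qed.

Section RowRelations.
Variables (F : fieldType) (d : nat).
Implicit Types (p : F) (x y z : 'M[F]_d).

(* The relations of M_t with q = -t, read on transposed matrices: [x], [y], [z]
   act on row vectors, so [y *m x *m z] is the transpose of [Z X Y]. *)
Definition qrel p x y z : Prop :=
  [/\ x *m x = 0, y *m y = 0, z *m z = 0 &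
   [/\ y *m x *m z = p *: (z *m x *m y), z *m y *m x = p *: (x *m y *m z)
     & x *m z *m y = p *: (y *m z *m x)]].

Definition row_simple x y z : Prop :=
  forall W : 'M[F]_d, stablemx W x -> stablemx W y -> stablemx W z ->
  \rank W = 0%N \/ \rank W = d.

Lemma qrel_rot p x y z : qrel p x y z -> qrel p y z x.
Proof. by case=> xx yy zz [yxz zyx xzy]; split. Qed.

Lemma row_simple_rot x y z : row_simple x y z -> row_simple y z x.
Proof. by move=> simple W Wy Wz Wx; apply: simple. Qed.

End RowRelations.

Lemma trmx_mul3 (F : fieldType) d (A B D : 'M[F]_d) :
  (A *m B *m D)^T = D^T *m B^T *m A^T.
Proof. by rewrite !trmx_mul mulmxA. Qed.

Lemma qrel_trmx (F : fieldType) d (p : F) (X Y Z : 'M[F]_d) :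
  qrel p X^T Y^T Z^T <->
  [/\ X *m X = 0, Y *m Y = 0, Z *m Z = 0 &
   [/\ Z *m X *m Y = p *: (Y *m X *m Z), X *m Y *m Z = p *: (Z *m Y *m X)
     & Y *m Z *m X = p *: (X *m Z *m Y)]].
Proof.
have trZ c (A : 'M[F]_d) : c *: A^T = (c *: A)^T by rewrite linearZ.
rewrite /qrel -!trmx_mul3 -!trmx_mul !trZ.
have trP (A B : 'M[F]_d) : A^T = B^T <-> A = B by split=> [/trmx_inj | ->].
have tr0 (A : 'M[F]_d) : A^T = 0 <-> A = 0.
  by split=> [AT0 | ->]; [rewrite -[A]trmxK AT0 | ]; rewrite trmx0.
by split=> -[/tr0 xx /tr0 yy /tr0 zz [/trP r1 /trP r2 /trP r3]].
Qed.

Section Transpose.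
Variables (R : realType) (d : nat).
Local Notation C := R[i].
Implicit Types (X Y Z : 'M[C]_d).

Lemma relsE (w t : C) X Y Z :
  let a := Z *m X *m Y + t *: (Y *m X *m Z) in
  let b := X *m Y *m Z + t *: (Z *m Y *m X) in
  let c := Y *m Z *m X + t *: (X *m Z *m Y) in
  [/\ rel1 w t X Y Z = a + w *: b + w ^+ 2 *: c,
      rel2 w t X Y Z = a + w ^+ 2 *: b + w *: c &
      relg t X Y Z = a + b + c].
Proof.
rewrite /rel1 /rel2 /relg.
move: (Z *m X *m Y) (Y *m X *m Z) (X *m Y *m Z) (Z *m Y *m X) (Y *m Z *m X)
  (X *m Z *m Y) => a1 a2 b1 b2 c1 c2 /=.
by split; apply/matrixP => i j; rewrite !mxE; ring.
Qed.

Lemma is_rep_Mt_qrel (w t : C) X Y Z : 3.-primitive_root w ->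
  is_rep_Mt w t X Y Z <-> qrel (- t) X^T Y^T Z^T.
Proof.
move=> prim_w; rewrite qrel_trmx /is_rep_Mt; have [-> -> ->] := relsE w t X Y Z.
have sum0P (A B : 'M[C]_d) : A + t *: B = 0 <-> A = - t *: B.
  rewrite scaleNr; split=> [/eqP | ->]; last exact: addNr.
  by rewrite addr_eq0 => /eqP.
split=> -[xx yy zz rels]; split; try assumption.
  case: rels => r1 r2 rg; have [a0 b0 c0] := dft3_mx_eq0 prim_w r1 r2 rg.
  by split; apply/sum0P.
case: rels => /sum0P-> /sum0P-> /sum0P->.
by rewrite !scaler0 !addr0.
Qed.

Lemma simple_rep_row_simple X Y Z :
  simple_rep X Y Z <-> (0 < d)%N /\ row_simple X^T Y^T Z^T.
Proof.
have invariantE (A U : 'M[C]_d) : col_invariant A U^T <-> stablemx U A^T.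
  split=> [[B AU] | /submxP[B UA]].
    by apply/submxP; exists B^T; apply: trmx_inj; rewrite !trmx_mul !trmxK.
  by exists B^T; apply: trmx_inj; rewrite !trmx_mul !trmxK.
split=> -[d_gt0 simple]; split=> // U.
  move=> /invariantE UX /invariantE UY /invariantE UZ.
  by rewrite -mxrank_tr; apply: simple.
rewrite -[U]trmxK => /invariantE UX /invariantE UY /invariantE UZ.
by rewrite mxrank_tr; have := simple _ UX UY UZ.
Qed.
End Transpose.

Section CommonKernel.
Variables (F : fieldType) (d : nat) (p : F) (x y z : 'M[F]_d).
Hypothesis xyz : qrel p x y z.

Lemma qrel_capker_neq0 : (0 < d)%N ->
  [|| (kermx x :&: kermx z)%MS != 0, (kermx y :&: kermx x)%MS != 0
    | (kermx z :&: kermx y)%MS != 0].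
Proof.
case: xyz => xx yy zz [yxz _ _] d_gt0; apply: contraTT isT.
rewrite !negb_or !negbK => /and3P[/eqP Kxz /eqP Kyx /eqP Kzy].
have ker0 (a b : 'M[F]_d) : (kermx a :&: kermx b)%MS = 0 ->
    forall v : 'rV[F]_d, v *m a = 0 -> v *m b = 0 -> v = 0.
  move=> K0 v va vb; apply/eqP; rewrite -submx0 -K0 sub_capmx.
  by apply/andP; split; apply/sub_kermxP.
have vy0 (v : 'rV[F]_d) : v *m y = 0.
  have vyxz : v *m y *m x *m z = 0.
    apply: (ker0 _ _ Kzy); first by rewrite -mulmxA zz mulmx0.
    have -> : v *m y *m x *m z *m y = v *m (y *m x *m z) *m y by rewrite !mulmxA.
    by rewrite yxz -scalemxAr -scalemxAl -!mulmxA yy !mulmx0 scaler0.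
  have vyx : v *m y *m x = 0 by apply: (ker0 _ _ Kxz); rewrite // -mulmxA xx mulmx0.
  by apply: (ker0 _ _ Kyx); rewrite // -mulmxA yy mulmx0.
have v0 (v : 'rV[F]_d) : v = 0.
  apply: (ker0 _ _ Kyx _ (vy0 v)).
  by apply: (ker0 _ _ Kyx); [exact: vy0 | rewrite -mulmxA xx mulmx0].
have := v0 (delta_mx 0 (Ordinal d_gt0)) => /matrixP/(_ 0 (Ordinal d_gt0)).
by rewrite !mxE eqxx => /eqP; rewrite oner_eq0.
Qed.

End CommonKernel.

Section UpperBound.
Variables (C : numClosedFieldType) (d n : nat) (p : C) (x y z : 'M[C]_d).
Hypotheses (xyz : qrel p x y z) (pn1 : p ^+ n = 1) (n_gt0 : (0 < n)%N).

Let p_neq0 : p != 0 := expr_eq1_neq0 n_gt0 pn1.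

Lemma mulmx_yz_pow_x m (M : 'M[C]_(m, d)) k :
  M *m x = 0 -> M *m (y *m z) ^+ k *m x = 0.
Proof.
case: xyz => _ _ _ [_ _ xzy] Mx; elim: k => [|k IHk]; first by rewrite expr0 mulmx1.
apply: (scalerI p_neq0); rewrite scaler0 exprSr -mulmxE.
have -> : M *m ((y *m z) ^+ k *m (y *m z)) *m x = M *m (y *m z) ^+ k *m (y *m z *m x).
  by rewrite !mulmxA.
by rewrite scalemxAr -xzy !mulmxA IHk !mul0mx.
Qed.

Lemma mulmx_yz_pow_z m (M : 'M[C]_(m, d)) k :
  M *m z = 0 -> M *m (y *m z) ^+ k *m z = 0.
Proof.
case: xyz => _ _ zz _ Mz; case: k => [|k]; first by rewrite expr0 mulmx1.
by rewrite exprSr -mulmxE -!mulmxA zz !mulmx0.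
Qed.

Lemma yz_pow_yx k : (y *m z) ^+ k *m (y *m x) = p ^+ k *: (y *m x *m (y *m z) ^+ k).
Proof.
case: xyz => _ _ _ [_ zyx _].
have yz_yx : y *m z *m (y *m x) = p *: (y *m x *m (y *m z)).
  have -> : y *m z *m (y *m x) = y *m (z *m y *m x) by rewrite !mulmxA.
  by rewrite zyx -scalemxAr !mulmxA.
elim: k => [|k IHk]; first by rewrite expr0 mul1mx mulmx1 scale1r.
rewrite exprSr -mulmxE -mulmxA yz_yx -scalemxAr [_ *m (y *m x *m _)]mulmxA IHk.
by rewrite -scalemxAl scalerA -exprS -mulmxA.
Qed.

Lemma capker_stable_yx : stablemx (kermx x :&: kermx z)%MS (y *m x).
Proof.
case: xyz => xx _ _ [yxz _ _]; set K := (kermx x :&: kermx z)%MS.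
have Kz : K *m z = 0 by apply/sub_kermxP; exact: capmxSr.
rewrite sub_capmx; apply/andP; split; apply/sub_kermxP.
  by rewrite -mulmxA -mulmxA xx !mulmx0.
by rewrite -!mulmxA (mulmxA y) yxz -scalemxAr !mulmxA Kz !mul0mx scaler0.
Qed.

Lemma capker_stable_yz_pow : stablemx (kermx x :&: kermx z)%MS ((y *m z) ^+ n).
Proof.
set K := (kermx x :&: kermx z)%MS.
have Kx : K *m x = 0 by apply/sub_kermxP; exact: capmxSl.
have Kz : K *m z = 0 by apply/sub_kermxP; exact: capmxSr.
by rewrite sub_capmx; apply/andP; split; apply/sub_kermxP;
  [exact: mulmx_yz_pow_x | exact: mulmx_yz_pow_z].
Qed.

Lemma yx_yz_pow_comm : y *m x *m (y *m z) ^+ n = (y *m z) ^+ n *m (y *m x).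
Proof. by rewrite yz_pow_yx pn1 scale1r. Qed.

Definition yz_orbit (v : 'rV[C]_d) : 'M[C]_(n, d) :=
  \matrix_(k < n) (v *m (y *m z) ^+ k).

Section Orbit.
Variables (v : 'rV[C]_d) (mu nu : C).
Hypotheses (vx : v *m x = 0) (vz : v *m z = 0).
Hypotheses (v_yx : v *m (y *m x) = mu *: v) (v_yzn : v *m (y *m z) ^+ n = nu *: v).
Let U := yz_orbit v.

Lemma yz_orbit_row k : (k < n)%N -> (v *m (y *m z) ^+ k <= U)%MS.
Proof.
by move=> lt_kn; have := row_sub (Ordinal lt_kn) U; rewrite rowK.
Qed.

Lemma yz_orbit_v : (v <= U)%MS.
Proof. by have := yz_orbit_row n_gt0; rewrite expr0 mulmx1. Qed.

Lemma yz_orbit_x : U *m x = 0.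
Proof.
by apply/row_matrixP => k; rewrite row_mul rowK row0 mulmx_yz_pow_x.
Qed.

Lemma yz_orbit_z : U *m z = 0.
Proof.
by apply/row_matrixP => k; rewrite row_mul rowK row0 mulmx_yz_pow_z.
Qed.

Lemma yz_orbit_yx : (U *m y *m x <= U)%MS.
Proof.
apply/row_subP => k; rewrite !row_mul rowK -!mulmxA yz_pow_yx -scalemxAr.
by rewrite mulmxA v_yx -scalemxAl scalerA scalemx_sub ?yz_orbit_row.
Qed.

(* The orbit closes up because [v] is an eigenvector of [(y z)^n]. *)
Lemma yz_orbit_yz : (U *m y *m z <= U)%MS.
Proof.
apply/row_subP => k; rewrite !row_mul rowK.
have -> : v *m (y *m z) ^+ k *m y *m z = v *m (y *m z) ^+ k.+1.
  by rewrite exprSr -mulmxE !mulmxA.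
have [lt_kn | le_nk] := ltnP k.+1 n; first exact: yz_orbit_row.
have -> : k.+1 = n by apply/eqP; rewrite eqn_leq le_nk ltn_ord.
by rewrite v_yzn scalemx_sub // yz_orbit_v.
Qed.

Lemma yz_orbit_stable :
  [/\ stablemx (U + U *m y)%MS x, stablemx (U + U *m y)%MS y
    & stablemx (U + U *m y)%MS z].
Proof.
case: xyz => _ yy _ _; rewrite !addsmxMr !addsmx_sub.
rewrite yz_orbit_x yz_orbit_z -(mulmxA U y y) yy mulmx0 !sub0mx addsmxSr /=.
by rewrite !(submx_trans _ (addsmxSl U (U *m y))) ?yz_orbit_yx ?yz_orbit_yz.
Qed.

Lemma yz_orbit_rank : (\rank (U + U *m y)%MS <= n + n)%N.
Proof.
apply: leq_trans (mxrank_adds_leqif U (U *m y)).1 _.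
by rewrite leq_add ?rank_leq_row.
Qed.

Lemma yz_orbit_neq0 : v != 0 -> (U + U *m y)%MS != 0.
Proof.
apply: contraNneq => W0; rewrite -submx0 -W0.
by rewrite (submx_trans yz_orbit_v) ?addsmxSl.
Qed.

End Orbit.

Lemma qrel_simple_capker_le : row_simple x y z ->
  (kermx x :&: kermx z)%MS != 0 -> (d <= n + n)%N.
Proof.
move=> simple K_neq0.
have [v v_neq0 /and3P[vK /sub_rVP[mu v_yx] /sub_rVP[nu v_yzn]]] :=
  stablemx_common_eigenvector K_neq0 capker_stable_yx capker_stable_yz_pow
    yx_yz_pow_comm.
have vx : v *m x = 0 by apply/sub_kermxP; exact: submx_trans vK (capmxSl _ _).
have vz : v *m z = 0 by apply/sub_kermxP; exact: submx_trans vK (capmxSr _ _).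
have [Wx Wy Wz] := yz_orbit_stable vx vz v_yx v_yzn.
case: (simple _ Wx Wy Wz) => [/eqP | <-]; last exact: yz_orbit_rank.
by rewrite mxrank_eq0 (negbTE (yz_orbit_neq0 v_neq0)).
Qed.

End UpperBound.

Section WeylPair.
Variables (C : numClosedFieldType) (n : nat) (q : C).
Hypothesis prim_q : n.-primitive_root q.

Definition clock : 'M[C]_n := diag_mx (\row_(i < n) q ^+ i).
Definition shift : 'M[C]_n := \matrix_(i, j) (j == ordS i)%:R.

Lemma shift_clock : shift *m clock = q *: (clock *m shift).
Proof.
apply/matrixP => i j; rewrite mul_mx_diag mul_diag_mx !mxE.
case: (j =P ordS i) => [-> | _] /=; last by rewrite mul0r !mulr0.
by rewrite (prim_expr_mod prim_q) exprS mul1r mulr1.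
Qed.

Lemma row_clock (a : 'rV[C]_n) j : (a *m clock) 0 j = a 0 j * q ^+ j.
Proof. by rewrite mul_mx_diag !mxE. Qed.

Lemma clock_eigenvalue (a : 'rV[C]_n) c (k : 'I_n) :
  a *m clock = c *: a -> a 0 k != 0 -> c = q ^+ k.
Proof.
move=> /matrixP/(_ 0 k); rewrite row_clock mxE [c * _]mulrC => aQk a_neq0.
exact/esym/(mulfI a_neq0).
Qed.

Lemma clock_eigenvector (a : 'rV[C]_n) (k : 'I_n) :
  a *m clock = q ^+ k *: a -> a = a 0 k *: delta_mx 0 k.
Proof.
move=> /matrixP aQ; apply/rowP => j; rewrite !mxE.
have [-> | jk] := eqVneq j k; first by rewrite mulr1.
rewrite mulr0; apply/eqP; apply: contraNT jk => a_neq0.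
move: (aQ 0 j); rewrite row_clock mxE [_ * a 0 j]mulrC => /(mulfI a_neq0)/eqP.
by rewrite (eq_prim_root_expr prim_q) !modn_small.
Qed.

Lemma delta_shift k : delta_mx 0 k *m shift = delta_mx 0 (ordS k) :> 'rV[C]_n.
Proof. by rewrite -rowE; apply/rowP => j; rewrite !mxE. Qed.

Definition weyl_x : 'M[C]_(n + n) := block_mx 0 0 clock 0.
Definition weyl_y : 'M[C]_(n + n) := block_mx 0 1%:M 0 0.
Definition weyl_z : 'M[C]_(n + n) := block_mx 0 0 shift 0.

Lemma weyl_qrel : qrel q weyl_x weyl_y weyl_z.
Proof.
rewrite /qrel /weyl_x /weyl_y /weyl_z !mulmx_block.
rewrite !(mul0mx, mulmx0, mul1mx, mulmx1, addr0, add0r) !scale_block_mx.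
by rewrite !scaler0 shift_clock !block_mx0.
Qed.

Lemma row_mx_weyl_x (a b : 'rV[C]_n) : row_mx a b *m weyl_x = row_mx (b *m clock) 0.
Proof. by rewrite mul_row_block !(mulmx0, mulmx1, addr0, add0r). Qed.

Lemma row_mx_weyl_y (a b : 'rV[C]_n) : row_mx a b *m weyl_y = row_mx 0 a.
Proof. by rewrite mul_row_block !(mulmx0, mulmx1, addr0, add0r). Qed.

Lemma row_mx_weyl_z (a b : 'rV[C]_n) : row_mx a b *m weyl_z = row_mx (b *m shift) 0.
Proof. by rewrite mul_row_block !(mulmx0, mulmx1, addr0, add0r). Qed.

Lemma row_mx_weyl_clock (a b : 'rV[C]_n) :
  row_mx a b *m (weyl_y *m weyl_x + weyl_x *m weyl_y) =
  row_mx (a *m clock) (b *m clock).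
Proof.
rewrite mulmxDr !mulmxA !row_mx_weyl_y !row_mx_weyl_x row_mx_weyl_y.
by rewrite add_row_mx addr0 add0r.
Qed.

Definition weyl_top (k : 'I_n) : 'rV[C]_(n + n) := row_mx (delta_mx 0 k) 0.

Lemma clock_eigen_top (a : 'rV[C]_n) (k : 'I_n) :
  a *m clock = q ^+ k *: a -> row_mx (a *m clock) 0 = (q ^+ k * a 0 k) *: weyl_top k.
Proof.
by move=> aQ; rewrite aQ {1}(clock_eigenvector aQ) scalerA scale_row_mx scaler0.
Qed.

Lemma weyl_top_yz k : weyl_top k *m (weyl_y *m weyl_z) = weyl_top (ordS k).
Proof. by rewrite mulmxA row_mx_weyl_y row_mx_weyl_z delta_shift. Qed.

Section WeylSubmodule.
Variable W : 'M[C]_(n + n).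
Hypotheses (Wx : stablemx W weyl_x) (Wy : stablemx W weyl_y) (Wz : stablemx W weyl_z).

Lemma weyl_full_of_top k : (weyl_top k <= W)%MS -> row_full W.
Proof.
move=> topk; have top j : (weyl_top j <= W)%MS.
  apply: (ordS_ind (P := fun j => weyl_top j <= W)%MS) topk _ j => i topi.
  by rewrite -weyl_top_yz stablemx_submx_mul ?stablemxM.
rewrite -sub1mx (scalar_mx_block n n 1) col_mx_sub; apply/andP; split;
  apply/row_subP => i; rewrite row_row_mx row1 row0; first exact: top.
by rewrite -(row_mx_weyl_y _ 0) stablemx_submx_mul ?top.
Qed.

(* [weyl_y weyl_x + weyl_x weyl_y] acts as [clock] on both halves, so each of
   its eigenvectors involves a single basis vector of each half. *)
Lemma weyl_top_exists : W != 0 -> exists k, (weyl_top k <= W)%MS.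
Proof.
move=> W_neq0; pose E := weyl_y *m weyl_x + weyl_x *m weyl_y.
have WE : stablemx W E by rewrite stablemxD ?stablemxM.
have [v v_neq0 /and3P[vW /sub_rVP[c vE] _]] :=
  stablemx_common_eigenvector W_neq0 WE WE erefl.
rewrite -[v]hsubmxK in v_neq0 vW vE; move: (lsubmx v) (rsubmx v) v_neq0 vW vE.
move=> a b ab_neq0 abW abE {v}.
have /eq_row_mx[aQ bQ] : row_mx (a *m clock) (b *m clock) = row_mx (c *: a) (c *: b).
  by rewrite -scale_row_mx -abE row_mx_weyl_clock.
have [k abk] := row_mx_neq0_coord ab_neq0.
have ck : c = q ^+ k.
  by case/orP: abk; [exact: clock_eigenvalue aQ | exact: clock_eigenvalue bQ].
rewrite {}ck in aQ bQ.
have q_neq0 : q != 0 :=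
  expr_eq1_neq0 (prim_order_gt0 prim_q) (prim_expr_order prim_q).
have top_scale (e : C) M : e != 0 -> stablemx W M ->
    row_mx a b *m M = e *: weyl_top k -> (weyl_top k <= W)%MS.
  move=> e_neq0 WM abM; rewrite -(eqmx_scale _ e_neq0) -abM.
  exact: stablemx_submx_mul.
exists k; case/orP: abk => [ak | bk].
  apply: (top_scale (q ^+ k * a 0 k) (weyl_y *m weyl_x));
    rewrite ?mulf_neq0 ?expf_neq0 ?stablemxM //.
  by rewrite mulmxA row_mx_weyl_y row_mx_weyl_x (clock_eigen_top aQ).
apply: (top_scale (q ^+ k * b 0 k) weyl_x); rewrite ?mulf_neq0 ?expf_neq0 //.
by rewrite row_mx_weyl_x (clock_eigen_top bQ).
Qed.

End WeylSubmodule.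

Lemma weyl_row_simple : row_simple weyl_x weyl_y weyl_z.
Proof.
move=> W Wx Wy Wz; have [-> | W_neq0] := eqVneq W 0; first by left; rewrite mxrank0.
have [k topk] := weyl_top_exists Wx Wy W_neq0.
by right; apply/eqP; have := weyl_full_of_top Wy Wz topk.
Qed.

End WeylPair.

Lemma qrel_simple_dim_le (C : numClosedFieldType) d n (p : C) (x y z : 'M[C]_d) :
  qrel p x y z -> row_simple x y z -> p ^+ n = 1 -> (0 < n)%N -> (0 < d)%N ->
  (d <= n + n)%N.
Proof.
move=> xyz simple pn1 n_gt0 d_gt0.
have yzx := qrel_rot xyz; have zxy := qrel_rot yzx.
have simple' := row_simple_rot simple; have simple'' := row_simple_rot simple'.
case/or3P: (qrel_capker_neq0 xyz d_gt0) => K_neq0.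
- exact: qrel_simple_capker_le xyz pn1 n_gt0 simple K_neq0.
- exact: qrel_simple_capker_le yzx pn1 n_gt0 simple' K_neq0.
- exact: qrel_simple_capker_le zxy pn1 n_gt0 simple'' K_neq0.
Qed.

Theorem mainTheorem14 (R : realType) (w t : R[i]) (n : nat) :
  3.-primitive_root w -> t != 0 -> n.-primitive_root (- t) ->
  PI_degree_Mt w t (2 * n).
Proof.
(* [t != 0] already follows from the primitivity of [- t]. *)
move=> prim_w _ prim_t; have n_gt0 := prim_order_gt0 prim_t.
rewrite mul2n -addnn; split.
  exists (weyl_x n (- t))^T, (weyl_y _ n)^T, (weyl_z _ n)^T; split.
    by apply/(is_rep_Mt_qrel _ _ _ _ prim_w); rewrite !trmxK; exact: weyl_qrel.
  apply/simple_rep_row_simple; rewrite !trmxK; split; first by rewrite addn_gt0 n_gt0.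
  exact: weyl_row_simple.
move=> d X Y Z /(is_rep_Mt_qrel _ _ _ _ prim_w) XYZ /simple_rep_row_simple[d_gt0 simple].
exact: qrel_simple_dim_le XYZ simple (prim_expr_order prim_t) n_gt0 d_gt0.
Qed.
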